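(* On torsionfree bornological \(V\)-modules, the assignment \(M\mapsto M'\) is right adjoint to the inclusion of the full subcategory of nuclear, torsionfree bornological \(V\)-modules into the category of torsionfree bornological \(V\)-modules (with bounded \(V\)-linear maps as morphisms). That is, for every torsionfree bornological \(V\)-module \(N\), \(N'\) is a nuclear torsionfree bornological \(V\)-module, and for every nuclear torsionfree bornological \(V\)-module \(M\), a \(V\)-linear map \(M\to N\) is bounded if and only if it is bounded as a map \(M\to N'\).
   Context: Let \(V\) be a complete discrete valuation ring with uniformiser \(\pi\) and fraction field \(F\). A bornology on a set is a collection of subsets (called bounded) containing all finite subsets and closed under finite unions and under taking subsets. A bornological \(V\)-module is a \(V\)-module with a bornology such that every bounded subset is contained in a bounded \(V\)-submodule; a \(V\)-linear map is bounded if it maps bounded subsets to bounded subsets. \(M\) is torsionfree if it is torsionfree as a \(V\)-module and \(\pi^{-1}S=\{x:\pi x\in S\}\) is bounded for every bounded \(S\). A subset \(S\subseteq M\) is compactoid if there is a bounded \(V\)-submodule \(T\subseteq M\) with \(S\subseteq T\) such that for every \(n\in\mathbb N\) there is a finite set \(F_n\subseteq T\) with \(S\subseteq VF_n+\pi^nT\). \(M'\) denotes \(M\) with the bornology of compactoid subsets; \(M\) is nuclear if every bounded subset of \(M\) is compactoid. *)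

From HB Require Import structures.
From mathcomp Require Import all_boot all_order all_algebra.
From mathcomp Require Import classical_sets cardinality.
Set Implicit Arguments. Unset Strict Implicit. Unset Printing Implicit Defensive.
Import GRing.Theory.
Local Open Scope classical_set_scope.
Local Open Scope ring_scope.

Definition is_uniformiser (V : idomainType) (pi : V) : Prop :=
  pi != 0 /\ pi \isn't a GRing.unit /\
  forall x : V, x != 0 -> exists (u : V) (n : nat), u \is a GRing.unit /\ x = u * pi ^+ n.

Definition pi_complete (V : idomainType) (pi : V) : Prop :=
  forall x : nat -> V, (forall n, exists y, x n.+1 - x n = pi ^+ n * y) ->
    exists l : V, forall n, exists y, l - x n = pi ^+ n * y.

Definition complete_dvr (V : idomainType) (pi : V) : Prop :=
  is_uniformiser pi /\ pi_complete pi.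

Definition is_bornology (T : Type) (B : set (set T)) : Prop :=
  (forall A : set T, finite_set A -> B A) /\
  (forall A C : set T, B A -> B C -> B (A `|` C)) /\
  (forall A C : set T, B A -> C `<=` A -> B C).

Definition is_submodule (V : pzRingType) (M : lmodType V) (S : set M) : Prop :=
  S 0 /\ (forall x y, S x -> S y -> S (x + y)) /\ (forall (a : V) x, S x -> S (a *: x)).

Definition born_module (V : pzRingType) (M : lmodType V) (B : set (set M)) : Prop :=
  is_bornology B /\
  forall S, B S -> exists T, B T /\ is_submodule T /\ S `<=` T.

Definition tf_born_module (V : pzRingType) (pi : V) (M : lmodType V)
    (B : set (set M)) : Prop :=
  born_module B /\
  (forall (a : V) (x : M), a *: x = 0 -> a = 0 \/ x = 0) /\
  (forall S, B S -> B [set x | S (pi *: x)]).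

Definition compactoid (V : pzRingType) (pi : V) (M : lmodType V)
    (B : set (set M)) (S : set M) : Prop :=
  exists T : set M, B T /\ is_submodule T /\ S `<=` T /\
    forall n : nat, exists F : seq M, (forall f, f \in F -> T f) /\
      forall x, S x -> exists (a : 'I_(size F) -> V) (t : M),
        T t /\ x = \sum_(i < size F) a i *: F`_i + pi ^+ n *: t.

(* the bornology of M' *)
Definition compactoid_born (V : pzRingType) (pi : V) (M : lmodType V)
    (B : set (set M)) : set (set M) := [set S | compactoid pi B S].

Definition nuclear (V : pzRingType) (pi : V) (M : lmodType V)
    (B : set (set M)) : Prop :=
  forall S, B S -> compactoid pi B S.

Definition bounded_map (T U : Type) (BT : set (set T)) (BU : set (set U))
    (f : T -> U) : Prop :=
  forall S, BT S -> BU (f @` S).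

From mathcomp Require Import all_boot all_order all_algebra.
From mathcomp Require Import boolp classical_sets cardinality.
Set Implicit Arguments. Unset Strict Implicit. Unset Printing Implicit Defensive.
Import GRing.Theory.
Local Open Scope classical_set_scope.
Local Open Scope ring_scope.

(* Every compactoid subset S of a bounded submodule T lies in a compactoid submodule U
   relative to which S is already compactoid; this one construction makes N' a
   bornological module and makes it nuclear.  Bounded maps out of a nuclear module send
   bounded (= compactoid) sets to compactoid sets, which gives the adjunction.

   To build U, write x in S as x = s_k + pi^(2k) t_k with s_k in the span of the
   (2k)-th finite approximation F_(2k) and t_k in T.  The increments
   y_k = t_k - pi^2 t_(k+1) satisfy pi^(2k) y_k = s_(k+1) - s_k, so they lie in
   {z in T | pi^(2k) z in span(F_(2k), F_(2k+2))}; as V is a discrete valuation ring this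
   set sits inside the span of a finite G_k in T, independent of x.  Take U to be the set
   of points lying, for every N, in span Q_N + pi^N T where Q_N consists of F_0 and the
   pi^k G_k for k < N.  The exponent 2k leaves a spare factor: pi^(2k) y_k = pi^k (pi^k y_k)
   is in span Q_N for k < N and in pi^N T otherwise. *)

Definition torsionfree (V : pzRingType) (M : lmodType V) : Prop :=
  forall (a : V) (x : M), a *: x = 0 -> a = 0 \/ x = 0.

Lemma tf_scalerI (V : idomainType) (M : lmodType V) (c : V) :
  torsionfree M -> c != 0 -> injective ( *:%R c : M -> M).
Proof.
move=> tfM c0 x y e; have : c *: (x - y) = 0 by rewrite scalerBr e subrr.
by case/tfM => [/eqP|/eqP]; [rewrite (negbTE c0) | rewrite subr_eq0 => /eqP].
Qed.

Section Submodule.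
Variables (V : pzRingType) (M : lmodType V) (T : set M).
Hypothesis subT : is_submodule T.

Lemma submodule0 : T 0.
Proof. by case: subT. Qed.

Lemma submoduleD x y : T x -> T y -> T (x + y).
Proof. by case: subT => _ [+ _]; apply. Qed.

Lemma submoduleZ a x : T x -> T (a *: x).
Proof. by case: subT => _ [_]; apply. Qed.

Lemma submoduleB x y : T x -> T y -> T (x - y).
Proof. by move=> Tx Ty; rewrite -scaleN1r; apply/submoduleD/submoduleZ. Qed.

Lemma submodule_sum (I : Type) (r : seq I) (P : pred I) (F : I -> M) :
  (forall i, P i -> T (F i)) -> T (\sum_(i <- r | P i) F i).
Proof. by move=> TF; apply: big_ind => //; [apply: submodule0 | apply: submoduleD]. Qed.

End Submodule.

Lemma submoduleI (V : pzRingType) (M : lmodType V) (T T' : set M) :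
  is_submodule T -> is_submodule T' -> is_submodule (T `&` T').
Proof.
move=> subT subT'; split; first by split; apply: submodule0.
by split=> [x y [? ?] [? ?]|a x [? ?]]; split; apply: submoduleD || apply: submoduleZ.
Qed.

Lemma image_submodule (V : pzRingType) (M N : lmodType V) (f : {linear M -> N})
    (T : set M) : is_submodule T -> is_submodule (f @` T).
Proof.
move=> subT; split; first by exists 0; [apply: submodule0 | rewrite linear0].
split=> [_ _ [x Tx <-] [y Ty <-]|a _ [x Tx <-]].
  by exists (x + y); [apply: submoduleD | rewrite linearD].
by exists (a *: x); [apply: submoduleZ | rewrite linearZ].
Qed.

Lemma preimage_submodule (V : pzRingType) (M N : lmodType V) (f : {linear M -> N})
    (T : set N) : is_submodule T -> is_submodule (f @^-1` T).
Proof.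
move=> subT; split; first by rewrite /preimage /= linear0; apply: submodule0.
split=> [x y Tx Ty|a x Tx]; rewrite /preimage /=.
  by rewrite linearD; apply: (submoduleD subT).
by rewrite linearZ; apply: (submoduleZ subT).
Qed.

Section LinearSpan.
Variables (V : pzRingType) (M : lmodType V).

Definition lspan (F : seq M) : set M :=
  [set x | exists a : nat -> V, x = \sum_(i < size F) a i *: F`_i].

Lemma lspan_submodule F : is_submodule (lspan F).
Proof.
split; first by exists (fun=> 0); rewrite big1 // => i _; rewrite scale0r.
split=> [_ _ [a ->] [b ->]|c _ [a ->]].
  by exists (fun i => a i + b i); rewrite -big_split; apply: eq_bigr => i _; rewrite scalerDl.
by exists (fun i => c * a i); rewrite scaler_sumr; apply: eq_bigr => i _; rewrite scalerA.
Qed.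

Lemma mem_lspan F f : f \in F -> lspan F f.
Proof.
move=> Ff; have iF : (index f F < size F)%N by rewrite index_mem.
exists (fun i => (i == index f F)%:R).
rewrite (bigD1 (Ordinal iF)) //= eqxx scale1r nth_index // big1 ?addr0 // => i.
by rewrite -val_eqE /= => /negPf ->; rewrite scale0r.
Qed.

Lemma lspan_sub_submodule F (T : set M) :
  is_submodule T -> (forall f, f \in F -> T f) -> lspan F `<=` T.
Proof.
move=> subT FT _ [a ->]; apply: submodule_sum => // i _.
by apply: (submoduleZ subT); apply: FT; apply: mem_nth.
Qed.

Lemma lspan_sub F G : (forall f, f \in F -> lspan G f) -> lspan F `<=` lspan G.
Proof. exact: lspan_sub_submodule (lspan_submodule G). Qed.

Lemma lspan_catl F G : lspan F `<=` lspan (F ++ G).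
Proof. by apply: lspan_sub => f Ff; apply: mem_lspan; rewrite mem_cat Ff. Qed.

Lemma lspan_catr F G : lspan G `<=` lspan (F ++ G).
Proof. by apply: lspan_sub => f Gf; apply: mem_lspan; rewrite mem_cat Gf orbT. Qed.

Lemma lspan_cons f F x :
  lspan (f :: F) x -> exists c y, lspan F y /\ x = c *: f + y.
Proof.
move=> [a ->]; rewrite /= big_ord_recl /=.
by exists (a 0%N), (\sum_(i < size F) a i.+1 *: F`_i); split => //; exists (fun i => a i.+1).
Qed.

End LinearSpan.

Lemma lspan_linear (V : pzRingType) (M N : lmodType V) (f : {linear M -> N}) F :
  f @` lspan F `<=` lspan (map f F).
Proof.
move=> _ [_ [a ->] <-]; exists a; rewrite linear_sum size_map.
by apply: eq_bigr => i _; rewrite linearZ (nth_map 0) // linear0.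
Qed.

Lemma lspan_mapZ (V : comPzRingType) (M : lmodType V) (c : V) (F : seq M) :
  lspan (map ( *:%R c) F) = ( *:%R c) @` lspan F.
Proof.
have sumE (a : nat -> V) : \sum_(i < size (map ( *:%R c) F)) a i *: (map ( *:%R c) F)`_i
    = c *: \sum_(i < size F) a i *: F`_i.
  rewrite size_map scaler_sumr; apply: eq_bigr => i _.
  by rewrite (nth_map 0) // !scalerA mulrC.
apply/seteqP; split=> [_ [a ->]|_ [_ [a ->] <-]]; last by exists a; rewrite sumE.
by exists (\sum_(i < size F) a i *: F`_i); [exists a | rewrite sumE].
Qed.

Lemma lift_seq_image (T U : eqType) (h : T -> U) (P : set T) (G : seq U) :
  (forall g, g \in G -> exists2 z, P z & g = h z) ->
  exists2 G', (forall z, z \in G' -> P z) & G = map h G'.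
Proof.
elim: G => [|g G IH] hG; first by exists [::].
have [z Pz ->] := hG g (mem_head _ _).
have [|G' PG' ->] := IH; first by move=> g' Gg'; apply: hG; rewrite inE Gg' orbT.
by exists (z :: G') => // z'; rewrite inE => /predU1P [->|/PG'].
Qed.

Section Uniformiser.
Variables (V : idomainType) (pi : V).
Hypothesis hpi : is_uniformiser pi.

Lemma uniformiser_ideal (I : set V) :
  (forall a c, I c -> I (a * c)) -> (exists2 c, c != 0 & I c) ->
  exists m, I (pi ^+ m) /\ forall c, I c -> exists d, c = d * pi ^+ m.
Proof.
move=> IM exI; have [_ [_ decomp]] := hpi.
have powI c : I c -> c != 0 ->
    exists u k, [/\ u \is a GRing.unit, c = u * pi ^+ k & I (pi ^+ k)].
  move=> Ic /decomp [u [k [uU cE]]]; exists u, k; split => //.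
  by have := IM u^-1 _ Ic; rewrite cE mulrA mulVr // mul1r.
have exk : exists k, `[< I (pi ^+ k) >].
  by have [c c0 /powI/(_ c0) [u [k [_ _ Ik]]]] := exI; exists k; apply/asboolP.
case: (ex_minnP exk) => m /asboolP Im minm; exists m; split => // c Ic.
have [->|c0] := eqVneq c 0; first by exists 0; rewrite mul0r.
have [u [k [_ -> /asboolP/minm mk]]] := powI c Ic c0.
by exists (u * pi ^+ (k - m)); rewrite -mulrA -exprD subnK.
Qed.

Lemma lspan_submodule_fg (M : lmodType V) (L : seq M) (P : set M) :
  is_submodule P -> P `<=` lspan L ->
  exists2 G : seq M, (forall g, g \in G -> P g) & P `<=` lspan G.
Proof.
elim: L P => [|f L IH] P subP PL; first by exists [::].
have [G' G'P PG'] := IH (P `&` lspan L) (submoduleI subP (lspan_submodule L)) (@subIsetr _ _ _).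
pose I c := exists2 y, lspan L y & P (c *: f + y).
have IM a c : I c -> I (a * c).
  move=> [y Ly Pcy]; exists (a *: y); first exact: (submoduleZ (lspan_submodule L)).
  by rewrite -scalerA -scalerDr; apply: (submoduleZ subP).
have [[c c0 Ic]|noI] := pselect (exists2 c, c != 0 & I c); last first.
  exists G'; first by move=> g /G'P [].
  move=> x Px.
  have [c [y [Ly xE]]] := lspan_cons (PL x Px).
  have [c0|c0] := eqVneq c 0; last by case: noI; exists c => //; exists y => //; rewrite -xE.
  by apply: PG'; split; rewrite // xE c0 scale0r add0r.
have [m [[y0 Ly0 Pp0] mgen]] := uniformiser_ideal IM (ex_intro2 _ _ c c0 Ic).
set p0 := pi ^+ m *: f + y0.
exists (p0 :: G'); first by move=> g; rewrite inE => /predU1P [->|/G'P []].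
move=> x Px.
have [c' [y [Ly xE]]] := lspan_cons (PL x Px).
have [d c'E] : exists d, c' = d * pi ^+ m by apply: mgen; exists y => //; rewrite -xE.
have -> : x = d *: p0 + (y - d *: y0).
  by rewrite xE c'E /p0 scalerDr scalerA addrACA subrr addr0.
apply: (submoduleD (lspan_submodule _)).
  by apply: (submoduleZ (lspan_submodule _)); apply: mem_lspan; rewrite mem_head.
apply: lspan_sub (PG' _ _) => [g Gg|]; first by apply: mem_lspan; rewrite inE Gg orbT.
split; last by apply: (submoduleB (lspan_submodule L) Ly); apply: (submoduleZ (lspan_submodule L)).
have -> : y - d *: y0 = x - d *: p0.
  by rewrite xE c'E /p0 scalerDr scalerA opprD addrACA subrr add0r.
by apply: (submoduleB subP Px); apply: (submoduleZ subP).
Qed.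

Lemma finite_lspan_divpow (M : lmodType V) (L : seq M) (T : set M) (j : nat) :
  torsionfree M -> is_submodule T ->
  exists G : seq M, (forall g, g \in G -> T g) /\
    forall z, T z -> lspan L (pi ^+ j *: z) -> lspan G z.
Proof.
move=> tfM subT.
pose P := lspan L `&` ( *:%R (pi ^+ j)) @` T.
have subP : is_submodule P.
  apply: submoduleI (lspan_submodule L) _.
  exact: image_submodule (( *:%R (pi ^+ j)) : {linear M -> M}) T subT.
have [G GP PG] := lspan_submodule_fg subP (@subIsetl _ _ _).
have [G' G'T GE] : exists2 G', (forall z, z \in G' -> T z) & G = map ( *:%R (pi ^+ j)) G'.
  by apply: lift_seq_image => g /GP [_ [z Tz <-]]; exists z.
exists G'; split=> // z Tz Lz.
have : P (pi ^+ j *: z) by split => //; exists z.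
move/PG; rewrite GE lspan_mapZ => -[y G'y /tf_scalerI yz].
by rewrite -yz //; apply: expf_neq0; case: hpi.
Qed.

End Uniformiser.

Section Compactoid.
Variables (V : comPzRingType) (pi : V) (M : lmodType V).

Definition lspan_plus (F : seq M) (n : nat) (T : set M) : set M :=
  [set x | exists s t, [/\ lspan F s, T t & x = s + pi ^+ n *: t]].

Definition compactoid_in (T S : set M) : Prop :=
  forall n, exists F : seq M, (forall f, f \in F -> T f) /\ S `<=` lspan_plus F n T.

Lemma compactoidE (B : set (set M)) (S : set M) :
  compactoid pi B S <->
  exists T, [/\ B T, is_submodule T, S `<=` T & compactoid_in T S].
Proof.
split=> [[T [BT [subT [ST approx]]]]|[T [BT subT ST approx]]].
  exists T; split=> // n; have [F [FT SF]] := approx n; exists F; split=> // x Sx.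
  have [a [t [Tt ->]]] := SF x Sx.
  exists (\sum_(i < size F) a i *: F`_i), t; split => //.
  exists (fun k => if insub k is Some i then a i else 0).
  by apply: eq_bigr => i _; rewrite valK.
exists T; do 3 split => //; move=> n; have [F [FT SF]] := approx n.
exists F; split => // x /SF [_ [t [[a ->] Tt ->]]].
by exists (fun i => a i), t.
Qed.

Section LspanPlus.
Variables (T : set M).
Hypothesis subT : is_submodule T.

Lemma lspan_plus_submodule F n : is_submodule (lspan_plus F n T).
Proof.
split.
  exists 0, 0; split; [exact: (submodule0 (lspan_submodule F)) | exact: (submodule0 subT) |].
  by rewrite scaler0 addr0.
split=> [_ _ [s [t [Fs Tt ->]]] [s' [t' [Fs' Tt' ->]]]|a _ [s [t [Fs Tt ->]]]].
  exists (s + s'), (t + t'); split; last by rewrite scalerDr addrACA.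
    exact: (submoduleD (lspan_submodule F) Fs Fs').
  exact: (submoduleD subT Tt Tt').
exists (a *: s), (a *: t); split; last by rewrite scalerDr !scalerA mulrC.
  exact: (submoduleZ (lspan_submodule F) _ Fs).
exact: (submoduleZ subT _ Tt).
Qed.

Lemma lspan_sub_plus F n : lspan F `<=` lspan_plus F n T.
Proof.
move=> s Fs; exists s, 0; split=> //; first exact: (submodule0 subT).
by rewrite scaler0 addr0.
Qed.

Lemma pow_lspan_plus F n k z : (n <= k)%N -> T z -> lspan_plus F n T (pi ^+ k *: z).
Proof.
move=> nk Tz; exists 0, (pi ^+ (k - n) *: z); split.
- exact: (submodule0 (lspan_submodule F)).
- exact: (submoduleZ subT _ Tz).
- by rewrite add0r scalerA -exprD subnKC.
Qed.

End LspanPlus.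

Lemma lspan_plus_subset (F F' : seq M) (T T' : set M) n :
  lspan F `<=` lspan F' -> T `<=` T' -> lspan_plus F n T `<=` lspan_plus F' n T'.
Proof. by move=> FF' TT' _ [s [t [Fs Tt ->]]]; exists s, t; split; [apply: FF'|apply: TT'|]. Qed.

Lemma lspan_plus_sub (T U : set M) F n : is_submodule U ->
  (forall f, f \in F -> U f) -> T `<=` U -> lspan_plus F n T `<=` U.
Proof.
move=> subU FU TU _ [s [t [Fs Tt ->]]].
apply: (submoduleD subU); first exact: lspan_sub_submodule Fs.
exact/(submoduleZ subU)/TU.
Qed.

Lemma compactoid_in_sub (T S : set M) :
  is_submodule T -> compactoid_in T S -> S `<=` T.
Proof.
move=> subT /(_ 0%N) [F [FT SF]] x /SF; exact: lspan_plus_sub.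
Qed.

End Compactoid.

Section CompactoidHull.
Variables (V : comPzRingType) (pi : V) (M : lmodType V).
Variables (T : set M) (F G : nat -> seq M).
Hypotheses (subT : is_submodule T) (FT : forall n f, f \in F n -> T f).
Hypothesis GT : forall k g, g \in G k -> T g.
Hypothesis Gspan : forall k z,
  T z -> lspan (F k.*2 ++ F k.+1.*2) (pi ^+ k.*2 *: z) -> lspan (G k) z.

Definition hull_gens (N : nat) : seq M :=
  F 0%N ++ flatten [seq map ( *:%R (pi ^+ k)) (G k) | k <- iota 0 N].

Definition hull : set M := [set y | forall N, lspan_plus pi (hull_gens N) N T y].

Lemma hull_gensP N q : q \in hull_gens N ->
  q \in F 0%N \/ exists k g, [/\ (k < N)%N, g \in G k & q = pi ^+ k *: g].
Proof.
rewrite mem_cat => /orP [|/flattenP [_ /mapP [k kN ->] /mapP [g Gg ->]]]; first by left.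
by right; exists k, g; rewrite mem_iota in kN.
Qed.

Lemma lspan_hull_gens N k y :
  (k < N)%N -> lspan (G k) y -> lspan (hull_gens N) (pi ^+ k *: y).
Proof.
move=> kN Gy; have : lspan (map ( *:%R (pi ^+ k)) (G k)) (pi ^+ k *: y).
  by rewrite lspan_mapZ; exists y.
apply: lspan_sub => q Gq; apply: mem_lspan; rewrite mem_cat; apply/orP; right.
apply/flattenP.
by exists (map ( *:%R (pi ^+ k)) (G k)) => //; apply/mapP; exists k; rewrite ?mem_iota.
Qed.

Lemma hull_gens_T N q : q \in hull_gens N -> T q.
Proof.
case/hull_gensP => [/FT //|[k [g [_ /GT Tg ->]]]].
exact: (submoduleZ subT _ Tg).
Qed.

Lemma hull_submodule : is_submodule hull.
Proof.
have subN N := lspan_plus_submodule pi subT (hull_gens N) N.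
split; first by move=> N; exact: (submodule0 (subN N)).
split=> [y z Hy Hz N|a y Hy N]; first exact: (submoduleD (subN N) (Hy N) (Hz N)).
exact: (submoduleZ (subN N) _ (Hy N)).
Qed.

Lemma hull_gens_hull N q : q \in hull_gens N -> hull q.
Proof.
move=> Nq N'; case/hull_gensP: Nq => [F0q|[k [g [_ Gg ->]]]].
  by apply: (lspan_sub_plus pi subT); apply: mem_lspan; rewrite mem_cat F0q.
have [kN'|N'k] := ltnP k N'; last exact: (pow_lspan_plus pi subT _ N'k (GT Gg)).
exact: (lspan_sub_plus pi subT N' (lspan_hull_gens kN' (mem_lspan Gg))).
Qed.

Lemma hull_sub_T : hull `<=` T.
Proof. by move=> y /(_ 0%N); apply: (lspan_plus_sub subT) => // q /hull_gens_T. Qed.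

Lemma compactoid_in_T_hull : compactoid_in pi T hull.
Proof. by move=> N; exists (hull_gens N); split=> [q /hull_gens_T|y]; last apply. Qed.

Section Telescope.
Variables (x : M) (s t : nat -> M).
Hypotheses (Fs : forall k, lspan (F k.*2) (s k)) (Tt : forall k, T (t k)).
Hypothesis xE : forall k, x = s k + pi ^+ k.*2 *: t k.

Let y k := t k - pi ^+ 2 *: t k.+1.

Lemma telescope_T k : T (y k).
Proof. exact: (submoduleB subT (Tt k) (submoduleZ subT _ (Tt k.+1))). Qed.

Lemma telescope_lspan k : lspan (G k) (y k).
Proof.
apply: Gspan (telescope_T k) _.
have tE j : pi ^+ j.*2 *: t j = x - s j by rewrite (xE j) addrAC subrr add0r.
have -> : pi ^+ k.*2 *: y k = s k.+1 - s k.
  by rewrite /y scalerBr scalerA -exprD addn2 -doubleS !tE opprB addrC addrA subrK.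
by apply: (submoduleB (lspan_submodule _)); [apply: lspan_catr | apply: lspan_catl].
Qed.

Lemma telescope n m : pi ^+ n *: t n =
  \sum_(k < m) pi ^+ (n + k.*2) *: y (n + k) + pi ^+ (n + m.*2) *: t (n + m).
Proof.
elim: m => [|m IH]; first by rewrite big_ord0 add0r !addn0.
rewrite big_ord_recr /= IH -addrA; congr (_ + _).
by rewrite doubleS !addnS /y scalerBr scalerA -exprD addn2 subrK.
Qed.

Lemma pow_telescope_lspan_plus N j : lspan_plus pi (hull_gens N) N T (pi ^+ j *: y j).
Proof.
have [jN|Nj] := ltnP j N; last exact: (pow_lspan_plus pi subT _ Nj (telescope_T j)).
exact: (lspan_sub_plus pi subT N (lspan_hull_gens jN (telescope_lspan j))).
Qed.

Lemma hull_pow_telescope n : hull (pi ^+ n *: t n).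
Proof.
move=> N; have subN := lspan_plus_submodule pi subT (hull_gens N) N.
rewrite (telescope n N); apply: (submoduleD subN).
  apply: (submodule_sum subN) => k _.
  by rewrite -addnn addnCA exprD -scalerA; apply/(submoduleZ subN)/pow_telescope_lspan_plus.
by apply: (pow_lspan_plus pi subT _ _ (Tt _)); rewrite -addnn addnA leq_addl.
Qed.

Lemma telescope_decomposition n : lspan_plus pi (hull_gens n) n hull x.
Proof.
exists (s 0%N + \sum_(k < n) pi ^+ k.*2 *: y k), (pi ^+ n *: t n); split.
- apply: (submoduleD (lspan_submodule _)); first exact/lspan_catl/(Fs 0).
  apply: (submodule_sum (lspan_submodule _)) => k _.
  rewrite -addnn exprD -scalerA; apply: (lspan_hull_gens (ltn_ord k)).
  exact: (submoduleZ (lspan_submodule _) _ (telescope_lspan k)).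
- exact: hull_pow_telescope.
- by rewrite (xE 0) (telescope 0 n) addrA scalerA -exprD addnn.
Qed.

End Telescope.

Lemma compactoid_in_hull S :
  (forall n, S `<=` lspan_plus pi (F n) n T) -> compactoid_in pi hull S.
Proof.
move=> SF n; exists (hull_gens n); split=> [|x Sx]; first exact: hull_gens_hull.
have [s st] := choice (fun k => SF k.*2 x Sx).
have [t stE] := choice st.
by apply: (telescope_decomposition (s := s) (t := t)) => k; case: (stE k).
Qed.

End CompactoidHull.

Lemma compactoid_hull (V : idomainType) (pi : V) (M : lmodType V) (T S : set M) :
  is_uniformiser pi -> torsionfree M -> is_submodule T -> compactoid_in pi T S ->
  exists U, [/\ is_submodule U, U `<=` T, compactoid_in pi T U & compactoid_in pi U S].
Proof.
move=> hpi tfM subT /choice [F FST].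
have FT n f : f \in F n -> T f by case: (FST n) => + _; apply.
have [G GTspan] := choice (fun k =>
  finite_lspan_divpow hpi (F k.*2 ++ F k.+1.*2) k.*2 tfM subT).
have GT k g : g \in G k -> T g by case: (GTspan k) => + _; apply.
have Gspan k := proj2 (GTspan k).
exists (hull pi T F G); split.
- exact: hull_submodule.
- exact: hull_sub_T.
- exact: compactoid_in_T_hull.
- by apply: compactoid_in_hull => // n; case: (FST n).
Qed.

Lemma compactoid_bounded (V : comPzRingType) (pi : V) (M : lmodType V)
    (B : set (set M)) (S : set M) :
  (forall A C, B A -> C `<=` A -> B C) -> compactoid pi B S -> B S.
Proof. by move=> Bsub /compactoidE [T [BT _ ST _]]; exact: Bsub BT ST. Qed.

Section CompactoidBornology.
Variables (V : idomainType) (pi : V) (N : lmodType V) (BN : set (set N)).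
Hypotheses (hpi : is_uniformiser pi) (tfBN : tf_born_module pi BN).

Let bornBN : born_module BN := tfBN.1.

Lemma compactoid_in_compactoid_submodule S : compactoid pi BN S ->
  exists U, [/\ compactoid pi BN U, is_submodule U, S `<=` U & compactoid_in pi U S].
Proof.
move=> /compactoidE [T [BT subT _ TS]].
have [U [subU UT TU US]] := compactoid_hull hpi tfBN.2.1 subT TS.
exists U; split=> //; last exact: compactoid_in_sub subU US.
by apply/compactoidE; exists T.
Qed.

Lemma compactoid_bornology : is_bornology (compactoid_born pi BN).
Proof.
have [[finB [unionB _]] boundB] := bornBN.
split=> [A finA|]; last split=> [A C|A C /compactoidE [T [BT subT AT TA]] CA].
- have [s As] := (finite_seqP A).1 finA.
  have [T [BT [subT AT]]] := boundB A (finB A finA).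
  apply/compactoidE; exists T; split=> // n; exists s; split=> [f sf|x Ax].
    by apply: AT; rewrite As.
  by apply: (lspan_sub_plus pi subT); apply: mem_lspan; rewrite As in Ax.
- move=> /compactoidE [T1 [BT1 _ AT1 T1A]] /compactoidE [T2 [BT2 _ CT2 T2C]].
  have [T [BT [subT T12]]] := boundB _ (unionB _ _ BT1 BT2).
  apply/compactoidE; exists T; split=> //.
    by move=> x [/AT1|/CT2] ?; apply: T12; [left|right].
  move=> n; have [F1 [F1T AF1]] := T1A n; have [F2 [F2T CF2]] := T2C n.
  exists (F1 ++ F2); split.
    by move=> f; rewrite mem_cat => /orP [/F1T|/F2T] ?; apply: T12; [left|right].
  move=> x [/AF1|/CF2]; apply: lspan_plus_subset.
  + exact: lspan_catl.
  + by move=> y ?; apply: T12; left.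
  + exact: lspan_catr.
  + by move=> y ?; apply: T12; right.
- apply/compactoidE; exists T; split=> [||x /CA /AT|n] //.
  by have [F [FT AF]] := TA n; exists F; split=> // x /CA /AF.
Qed.

Lemma compactoid_divpi S :
  compactoid pi BN S -> compactoid pi BN [set x | S (pi *: x)].
Proof.
move=> /compactoidE [T [BT subT ST TS]].
have subT' : is_submodule [set x | T (pi *: x)].
  exact: preimage_submodule (( *:%R pi) : {linear N -> N}) T subT.
apply/compactoidE; exists [set x | T (pi *: x)]; split=> [||x /ST //|n].
- exact: tfBN.2.2.
- exact: subT'.
have [F [FT SF]] := TS n.+1.
have [G [GT Gspan]] := finite_lspan_divpow hpi F 1 tfBN.2.1 subT'.
exists G; split=> // x /SF [s [t [Fs Tt pixE]]].
have piE : pi *: (x - pi ^+ n *: t) = s by rewrite scalerBr pixE scalerA -exprS addrK.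
exists (x - pi ^+ n *: t), t; split; last by rewrite subrK.
- apply: Gspan; last by rewrite expr1 piE.
  by rewrite /= piE; apply: (lspan_sub_submodule subT FT).
- exact: (submoduleZ subT).
Qed.

Lemma tf_born_compactoid : tf_born_module pi (compactoid_born pi BN).
Proof.
split; last by split; [exact: tfBN.2.1 | exact: compactoid_divpi].
split; first exact: compactoid_bornology.
by move=> S /compactoid_in_compactoid_submodule [U [cU subU SU _]]; exists U.
Qed.

Lemma nuclear_compactoid : nuclear pi (compactoid_born pi BN).
Proof.
move=> S /compactoid_in_compactoid_submodule [U [cU subU SU US]].
by apply/compactoidE; exists U.
Qed.

End CompactoidBornology.

Lemma compactoid_image (V : comPzRingType) (pi : V) (M N : lmodType V)
    (BM : set (set M)) (BN : set (set N)) (f : {linear M -> N}) (S : set M) :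
  bounded_map BM BN f -> compactoid pi BM S -> compactoid pi BN (f @` S).
Proof.
move=> bf /compactoidE [T [BT subT ST TS]].
apply/compactoidE; exists (f @` T); split.
- exact: bf.
- exact: image_submodule.
- by move=> _ [x Sx <-]; exists x; first exact: ST.
move=> n; have [F [FT SF]] := TS n; exists (map f F); split.
  by move=> _ /mapP [x Fx ->]; exists x; first exact: FT.
move=> _ [x /SF [s [t [Fs Tt ->]]] <-].
exists (f s), (f t); split; [exact: lspan_linear | by exists t | by rewrite linearD linearZ].
Qed.

Theorem lemma4p3 (V : idomainType) (pi : V) (hV : complete_dvr pi) :
  (forall (N : lmodType V) (BN : set (set N)),
      tf_born_module pi BN ->
      tf_born_module pi (compactoid_born pi BN) /\
      nuclear pi (compactoid_born pi BN)) /\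
  (forall (M N : lmodType V) (BM : set (set M)) (BN : set (set N)),
      tf_born_module pi BM -> nuclear pi BM ->
      tf_born_module pi BN ->
      forall f : {linear M -> N},
        bounded_map BM BN f <-> bounded_map BM (compactoid_born pi BN) f).
Proof.
have hpi := hV.1.
split=> [N BN tfN|M N BM BN _ nucM tfN f].
  by split; [exact: tf_born_compactoid | exact: nuclear_compactoid].
split=> [bf S /nucM cS|bf S /bf]; first exact: compactoid_image bf cS.
by apply: compactoid_bounded; case: tfN => [[[_ []]]].
Qed.
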